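(* Let $u_1, \ldots, u_n, v_1, \ldots, v_m \in \mathcal{L}_s$. Then $\max(u_1, \ldots, u_n) \leqslant_{\mathcal{L}} \max(v_1, \ldots, v_m)$ if and only if for every $i$ there exists $j$ such that $u_i \leqslant_{\mathcal{L}} v_j$.
   Context: $\mathcal{X}$ is a countable set of variables; a valuation is $\sigma\colon\mathcal{X}\to\mathbb{N}$. For finite $E\subseteq\mathcal{X}$, $x\in\mathcal{X}$, $S\in\mathbb{N}$, the sublevels $A(E,x,S)$ and $B(E,S)$ have values $[A(E,x,S)]_\sigma = 0$ if some $y\in E$ has $\sigma(y)=0$, and $\sigma(x)+S$ otherwise; $[B(E,S)]_\sigma=0$ if some $y\in E$ has $\sigma(y)=0$, and $S$ otherwise. $\mathcal{L}_s$ is the set of sublevels $A(E,x,S)$ with $x\in E$ and $B(E,S)$ with $S>0$. $\max$ of a finite family is evaluated pointwise (empty max has value $0$). $t_1\leqslant_{\mathcal{L}} t_2$ means $[t_1]_\sigma\le[t_2]_\sigma$ for every valuation $\sigma$. *)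

From mathcomp Require Import all_boot.
Set Implicit Arguments. Unset Strict Implicit. Unset Printing Implicit Defensive.

(* Variables: the countable set X is represented by nat. Valuations: nat -> nat. *)
Definition var := nat.
Definition valuation := var -> nat.

(* Sublevels: A(E,x,S) and B(E,S), with E a finite set of variables given as a list. *)
Inductive sublevel :=
| SA : seq var -> var -> nat -> sublevel
| SB : seq var -> nat -> sublevel.

Definition some_zero (sigma : valuation) (E : seq var) : bool :=
  has (fun y => sigma y == 0) E.

Definition eval (sigma : valuation) (t : sublevel) : nat :=
  match t with
  | SA E x k => if some_zero sigma E then 0 else sigma x + k
  | SB E k => if some_zero sigma E then 0 else k
  end.

Definition in_Ls (t : sublevel) : Prop :=
  match t with
  | SA E x _ => x \in E
  | SB _ k => 0 < k
  end.

(* Pointwise max of a finite family (empty max = 0). *)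
Definition eval_max (sigma : valuation) (n : nat) (ts : 'I_n -> sublevel) : nat :=
  \max_(i < n) eval sigma (ts i).

Definition le_L (t1 t2 : sublevel) : Prop :=
  forall sigma : valuation, eval sigma t1 <= eval sigma t2.

Definition le_L_max (n m : nat) (us : 'I_n -> sublevel) (vs : 'I_m -> sublevel) : Prop :=
  forall sigma : valuation, eval_max sigma us <= eval_max sigma vs.

(** Each sublevel of L_s is tested by a single valuation: for [B(E,S)] the indicator
    of [E], for [A(E,x,S)] the indicator of [E] raised to a huge value [K] at [x].
    Both give [u_i] a positive value, so if [max v_j] dominates [u_i] there, some
    [v_j] does, and then [v_j] is not cut to 0: its variable set [F] lies inside [E].
    For [A(E,x,S)] the height of [K] moreover forces [v_j = A(F,x,T)] with [S <= T].
    These conditions make [u_i <= v_j] hold at every valuation. *)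
From mathcomp Require Import all_boot.
From mathcomp Require Import zify.

Definition offset (t : sublevel) : nat :=
  match t with SA _ _ k => k | SB _ k => k end.

Lemma bigmax_witness (I : finType) (F : I -> nat) a :
  0 < a -> a <= \max_i F i -> exists i, a <= F i.
Proof.
move=> a_gt0 le_a_max.
have [/existsP // | /existsPn F_lt_a] := boolP [exists i, a <= F i].
have : \max_i F i <= a.-1.
  by apply/bigmax_leqP => i _; move: (F_lt_a i); rewrite -ltnNge; lia.
lia.
Qed.

Lemma le_L_max_of_le_L n m (u : 'I_n -> sublevel) (v : 'I_m -> sublevel) :
  (forall i, exists j, le_L (u i) (v j)) -> le_L_max u v.
Proof.
move=> uv sigma; apply/bigmax_leqP => i _.
have [j le_uv] := uv i; exact: leq_trans (le_uv sigma) (leq_bigmax j).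
Qed.

Lemma le_L_max_witness {n m} {u : 'I_n -> sublevel} {v : 'I_m -> sublevel} {sigma i} :
  le_L_max u v -> 0 < eval sigma (u i) ->
  exists j, eval sigma (u i) <= eval sigma (v j).
Proof.
move=> le_uv ui_gt0; apply: bigmax_witness ui_gt0 _.
exact: leq_trans (leq_bigmax i) (le_uv sigma).
Qed.

Section Supported.

Context {sigma : valuation} {E : seq var}.
Hypothesis supp_sigma : forall y, (sigma y == 0) = (y \notin E).

Lemma some_zero_supported (F : seq var) : some_zero sigma F = ~~ all (mem E) F.
Proof. by rewrite -has_predC; apply: eq_has => y; rewrite /= supp_sigma. Qed.

Lemma some_zero_supported_self : some_zero sigma E = false.
Proof. by rewrite some_zero_supported; apply/negbF/allP. Qed.

Lemma subset_of_supported {F : seq var} : ~~ some_zero sigma F -> {subset F <= E}.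
Proof. by rewrite some_zero_supported negbK => /allP. Qed.

End Supported.

Lemma some_zero_subset sigma {E F : seq var} :
  {subset F <= E} -> some_zero sigma F -> some_zero sigma E.
Proof. by move=> FE /hasP [z /FE zE z0]; apply/hasP; exists z. Qed.

Section SublevelOrder.

Context {E F : seq var}.
Hypothesis FE : {subset F <= E}.

Lemma le_L_SA_SA x S T : S <= T -> le_L (SA E x S) (SA F x T).
Proof.
move=> ST s /=; case: (boolP (some_zero s E)) => //= hE.
by rewrite (negbTE (contra (some_zero_subset s FE) hE)) leq_add2l.
Qed.

Lemma le_L_SB_SB S T : S <= T -> le_L (SB E S) (SB F T).
Proof.
move=> ST s /=; case: (boolP (some_zero s E)) => //= hE.
by rewrite (negbTE (contra (some_zero_subset s FE) hE)).
Qed.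

Lemma le_L_SB_SA y S T : y \in F -> S <= T.+1 -> le_L (SB E S) (SA F y T).
Proof.
move=> yF ST s /=; case: (boolP (some_zero s E)) => //= hE.
rewrite (negbTE (contra (some_zero_subset s FE) hE)).
have := hasPn hE y (FE y yF).
lia.
Qed.

End SublevelOrder.

Definition indicator (E : seq var) : valuation := fun y => y \in E.

Definition peak (E : seq var) (x : var) (K : nat) : valuation :=
  fun y => if y == x then K else y \in E.

Lemma indicator_eq0 E y : (indicator E y == 0) = (y \notin E).
Proof. by rewrite /indicator; case: (y \in E). Qed.

Lemma peak_eq0 {E x K} : x \in E -> 0 < K -> forall y, (peak E x K y == 0) = (y \notin E).
Proof.
rewrite /peak => xE K_gt0 y; case: (eqVneq y x) => [-> | _]; last by case: (y \in E).
by rewrite xE; case: K K_gt0.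
Qed.

Lemma le_L_SA_of_peak E x S v K :
  x \in E -> (offset v).+1 < K ->
  K + S <= eval (peak E x K) v -> le_L (SA E x S) v.
Proof.
move=> xE; case: v => [F y T | F T] /= lt_K.
  have supp := peak_eq0 xE (ltn_trans (ltn0Sn _) lt_K).
  case Fz: (some_zero _ F) => /= le_KS; first lia.
  have FE := subset_of_supported supp (negbT Fz).
  case: (eqVneq y x) le_KS => [-> | ne_yx]; rewrite /peak.
    by rewrite eqxx leq_add2l => /(le_L_SA_SA FE); apply.
  by rewrite (negbTE ne_yx); case: (y \in E) => /=; lia.
by case: (some_zero _ F) => /=; lia.
Qed.

Lemma le_L_SB_of_indicator E S v :
  in_Ls v -> S <= eval (indicator E) v -> le_L (SB E S) v.
Proof.
have [-> _ _ s | S_gt0] := posnP S; first by rewrite /=; case: (some_zero s E).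
case: v => [F y T | F T] /= v_Ls; case Fz: (some_zero _ F) => /= le_S.
- lia.
- have FE := subset_of_supported (indicator_eq0 E) (negbT Fz).
  move: le_S; rewrite /indicator (FE y v_Ls) => le_S.
  exact: le_L_SB_SA FE y S T v_Ls le_S.
- lia.
- exact: le_L_SB_SB (subset_of_supported (indicator_eq0 E) (negbT Fz)) S T le_S.
Qed.

(* [K] must beat every offset of the [v_j] by 2: then a value [K + S] at [peak E x K]
   can only be reached by an [A]-sublevel on the variable [x] itself. *)
Definition test_valuation (K : nat) (t : sublevel) : valuation :=
  match t with SA E x _ => peak E x K | SB E _ => indicator E end.

Lemma test_valuation_pos {K t} : 0 < K -> in_Ls t -> 0 < eval (test_valuation K t) t.
Proof.
case: t => [E x S | E S] /= K_gt0 t_Ls.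
  by rewrite (some_zero_supported_self (peak_eq0 t_Ls K_gt0)) /peak eqxx; lia.
by rewrite (some_zero_supported_self (indicator_eq0 E)).
Qed.

Lemma le_L_of_test_valuation K t v :
  in_Ls t -> in_Ls v -> (offset v).+1 < K ->
  eval (test_valuation K t) t <= eval (test_valuation K t) v -> le_L t v.
Proof.
case: t => [E x S | E S] t_Ls v_Ls lt_K.
  rewrite /= (some_zero_supported_self (peak_eq0 t_Ls (ltn_trans (ltn0Sn _) lt_K))).
  by rewrite /peak eqxx; apply: le_L_SA_of_peak.
by rewrite /= (some_zero_supported_self (indicator_eq0 E)); apply: le_L_SB_of_indicator.
Qed.

Theorem theorem37 (n m : nat) (u : 'I_n -> sublevel) (v : 'I_m -> sublevel) :
  (forall i, in_Ls (u i)) ->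
  (forall j, in_Ls (v j)) ->
  (le_L_max u v <-> forall i : 'I_n, exists j : 'I_m, le_L (u i) (v j)).
Proof.
move=> u_Ls v_Ls; split=> [le_uv i | ]; last exact: le_L_max_of_le_L.
pose K := (\max_j offset (v j)).+2.
have [j le_ij] := le_L_max_witness le_uv (test_valuation_pos (isT : 0 < K) (u_Ls i)).
exists j; apply: le_L_of_test_valuation (u_Ls i) (v_Ls j) _ le_ij.
by rewrite !ltnS leq_bigmax.
Qed.
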